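(* For every $c^+>1$ there exists $N\in\mathbb{N}$ with $b_n\le c^+\sqrt n/\sqrt3$ for all $n\ge N$. Given any such pair $(c^+,N)$, set $$C_\alpha=\frac{3^{1/4}}{\sqrt{c^+}},\qquad \theta=\frac{(c^+)^2}{3}\Big(\big(1+\tfrac1N\big)\big(1+\tfrac2N\big)\Big)^{1/4}.$$ Then for all $n\ge N$, $$\alpha_n\ge C_\alpha n^{3/4}\qquad\text{and}\qquad \frac{\beta_n}{\alpha_n}\le\theta.$$ For $\kappa=4$ one may take $c^+=1.025$ and $N=2187$, giving $C_\alpha\approx1.299925254$ and $\theta\approx0.350328462$.
   Context: Let $\kappa\in\mathbb{R}$, $V(x)=x^4/4-\kappa x^2/2$, and $\nu(dx)=e^{-V}dx/\int e^{-V}$. Let $p_n$ be its orthonormal polynomials, with recurrence $xp_n=a_{n+1}p_{n+1}+a_np_{n-1}$, $a_0=0$, and $a_n>0$ for $n\ge1$. Set $b_n=a_n^2$ (the unique positive solution of $n/b_n=b_{n-1}+b_n+b_{n+1}-\kappa$ with $b_0=0$). For $n\ge1$ define $\alpha_n=n/a_n$ and $\beta_n=a_na_{n+1}a_{n+2}$. *)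

From Stdlib Require Import Reals Lra.
Open Scope R_scope.

(* b n = a_n^2 : the recurrence coefficients of the quartic Freud weight,
   characterised (as in the paper) as the positive solution of the string
   (Freud) equation  n / b_n = b_{n-1} + b_n + b_{n+1} - kappa,  b_0 = 0. *)
Definition freud_solution (kappa : R) (b : nat -> R) : Prop :=
  b 0%nat = 0 /\
  (forall n : nat, (1 <= n)%nat -> 0 < b n) /\
  (forall n : nat, (1 <= n)%nat ->
     INR n / b n = b (n - 1)%nat + b n + b (S n) - kappa).

Definition a_coef (b : nat -> R) (n : nat) : R := sqrt (b n).

Definition alpha (b : nat -> R) (n : nat) : R := INR n / a_coef b n.

Definition beta (b : nat -> R) (n : nat) : R :=
  a_coef b n * a_coef b (S n) * a_coef b (S (S n)).

Definition C_alpha (cp : R) : R := Rpower 3 (1/4) / sqrt cp.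

Definition theta (cp : R) (N : nat) : R :=
  cp ^ 2 / 3 * Rpower ((1 + 1 / INR N) * (1 + 2 / INR N)) (1/4).

Definition upper_pair (b : nat -> R) (cp : R) (N : nat) : Prop :=
  forall n : nat, (N <= n)%nat -> b n <= cp * sqrt (INR n) / sqrt 3.

From Stdlib Require Import Reals Lra Lia.
Open Scope R_scope.

(* The string equation has the explicit equilibrium
   [B_n = (kappa + sqrt (kappa^2 + 12 n)) / 6], the positive root of
   [n = B (3 B - kappa)].  Subtracting the two equations gives, for the errors
   [e_m = b_m - B_m],
     [e_n (n + B_n b_n) = b_n B_n (sigma_n - e_(n-1) - e_(n+1))],
   where [sigma_n = 2 B_n - B_(n-1) - B_(n+1)] is a nonnegative concavity
   defect of order [n^(-3/2)].  Beyond a threshold depending on [kappa] one has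
   [n + B_n b_n >= 5/2 b_n B_n], hence the two-sided recursion
   [|e_n| <= 2/5 (|e_(n-1)| + |e_(n+1)|) + sigma_n], whose solutions of linear
   growth decay like [2^-n] up to [5 sup sigma].  So [b_n <= B_n + O(1)
   <= sqrt (n/3) + O(1)], which gives [N] for every [c+ > 1]; for [kappa = 4]
   starting the decay at [n = 2099] gives the explicit pair.  The bounds on
   [alpha_n] and [beta_n / alpha_n] follow by comparing fourth powers, using
   [a_n^4 = b_n^2 <= (c+)^2 n / 3]. *)

Lemma pow_lt_reg n x y : 0 <= y -> x ^ n < y ^ n -> x < y.
Proof.
  intros hy hxy. apply Rnot_le_lt. intros hyx.
  pose proof (pow_incr y x n (conj hy hyx)). lra.
Qed.

Lemma pow_le_reg n x y : (0 < n)%nat -> 0 <= x -> 0 <= y -> x ^ n <= y ^ n -> x <= y.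
Proof.
  intros hn hx hy hxy. apply Rnot_lt_le. intros hyx.
  destruct n as [|n]; [lia|].
  pose proof (pow_incr y x n (conj hy (Rlt_le _ _ hyx))).
  assert (0 < x ^ n) by (apply pow_lt; lra).
  simpl in hxy. nra.
Qed.

Lemma le_sqrt_of_sq x a : 0 <= a -> a ^ 2 <= x -> a <= sqrt x.
Proof. intros ha h. rewrite <- (sqrt_pow2 a ha). apply sqrt_le_1_alt, h. Qed.

Lemma sqrt_le_of_sq x a : 0 <= a -> x <= a ^ 2 -> sqrt x <= a.
Proof. intros ha h. rewrite <- (sqrt_pow2 a ha). apply sqrt_le_1_alt, h. Qed.

Lemma Rpower_pow4 x y : 0 < x -> Rpower x y ^ 4 = Rpower x (4 * y).
Proof.
  intros hx. rewrite <- Rpower_pow by (unfold Rpower; apply exp_pos).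
  rewrite Rpower_mult. f_equal. simpl. ring.
Qed.

Lemma half_pow_bounds j : 0 <= (/2) ^ j <= 1.
Proof. induction j; simpl; [lra | split; nra]. Qed.

Lemma Rle_of_forall_pow_slack a b C q : 0 <= q < 1 ->
  (forall j, a <= b + C * q ^ j) -> a <= b.
Proof.
  intros hq h. apply Rnot_lt_le. intros hba.
  assert (hC : 0 <= C) by (specialize (h 0%nat); simpl in h; lra).
  destruct (pow_lt_1_zero q ltac:(rewrite Rabs_pos_eq; lra) ((a - b) / (C + 1)))
    as [j hj]; [apply Rdiv_lt_0_compat; lra|].
  specialize (hj j (le_n j)). rewrite Rabs_pos_eq in hj by (apply pow_le; lra).
  specialize (h j).
  assert (q ^ j * (C + 1) < a - b).
  { apply Rmult_lt_reg_r with (/ (C + 1)); [apply Rinv_0_lt_compat; lra|].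
    rewrite Rmult_assoc, Rinv_r, Rmult_1_r by lra. exact hj. }
  pose proof (pow_le q j ltac:(lra)). nra.
Qed.

Section TwoSidedRecursion.

Variables (E : nat -> R) (G t : R).
Hypotheses (hG : 0 <= G) (ht : 0 <= t)
  (hE : forall k, 0 <= E k <= G * (INR k + 1))
  (hrec : forall k, E (S k) <= 2/5 * (E k + E (S (S k))) + t).

(* Each induction step on [j] trades the linear a priori bound for one
   contracted by 4/5; the profile [E 0 (1/2)^k + 5 t] is a fixed point. *)
Lemma two_sided_recursion_approx j k :
  E k <= E 0%nat * (/2) ^ k + 5 * t + G * (4/5) ^ j * (INR k + 1).
Proof.
  revert k. induction j as [|j IH]; intros k.
  - pose proof (hE k). pose proof (hE 0%nat). pose proof (half_pow_bounds k).
    simpl. nra.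
  - destruct k as [|k].
    + pose proof (pow_le (4/5) j ltac:(lra)). simpl. nra.
    + eapply Rle_trans; [apply hrec|].
      pose proof (IH k) as H1. pose proof (IH (S (S k))) as H2.
      rewrite !S_INR in *. simpl pow in *. nra.
Qed.

Lemma two_sided_recursion_decay k : E k <= E 0%nat * (/2) ^ k + 5 * t.
Proof.
  apply (Rle_of_forall_pow_slack _ _ (G * (INR k + 1)) (4/5)); [lra|].
  intros j. pose proof (two_sided_recursion_approx j k). lra.
Qed.

End TwoSidedRecursion.

(* The positive root of [3 B^2 - k B = n]: the value of [b n] for which the
   string equation would hold with [b (n-1) = b n = b (n+1)]. *)
Definition string_equilibrium (k : R) (n : nat) : R :=
  (k + sqrt (k ^ 2 + 12 * INR n)) / 6.

Lemma string_discriminant_nonneg k n : 0 <= k ^ 2 + 12 * INR n.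
Proof. pose proof (pos_INR n). nra. Qed.

Lemma string_equilibrium_eq k n :
  INR n = 3 * string_equilibrium k n ^ 2 - k * string_equilibrium k n.
Proof.
  unfold string_equilibrium.
  pose proof (pow2_sqrt _ (string_discriminant_nonneg k n)).
  set (s := sqrt (k ^ 2 + 12 * INR n)) in *.
  replace (INR n) with ((s ^ 2 - k ^ 2) / 12) by lra. field.
Qed.

Lemma string_equilibrium_pos k n : (1 <= n)%nat -> 0 < string_equilibrium k n.
Proof.
  intros hn. unfold string_equilibrium.
  pose proof (pow2_sqrt _ (string_discriminant_nonneg k n)).
  pose proof (sqrt_pos (k ^ 2 + 12 * INR n)).
  pose proof (le_INR 1 n hn). simpl INR in *.
  assert (- k < sqrt (k ^ 2 + 12 * INR n)).
  { apply Rnot_le_lt. intros h.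
    assert (0 <= (- k - sqrt (k ^ 2 + 12 * INR n)) * (- k + sqrt (k ^ 2 + 12 * INR n)))
      by (apply Rmult_le_pos; lra).
    nra. }
  lra.
Qed.

Lemma string_equilibrium_le_linear k n :
  string_equilibrium k n <= Rabs k + k ^ 2 + 2 * INR n + 1.
Proof.
  unfold string_equilibrium.
  pose proof (pow2_sqrt _ (string_discriminant_nonneg k n)).
  pose proof (sqrt_pos (k ^ 2 + 12 * INR n)). pose proof (pos_INR n).
  pose proof (Rle_abs k). pose proof (Rabs_pos k).
  assert (sqrt (k ^ 2 + 12 * INR n) <= k ^ 2 + 12 * INR n + 1)
    by nra.
  nra.
Qed.

Lemma string_equilibrium_le_sqrt k n :
  string_equilibrium k n <= Rabs k / 3 + sqrt (INR n) / sqrt 3.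
Proof.
  pose proof (pos_INR n). pose proof (Rle_abs k). pose proof (Rabs_pos k).
  pose proof (pow2_abs k). pose proof (sqrt_pos (INR n)).
  pose proof (pow2_sqrt (INR n) ltac:(lra)).
  pose proof (pow2_sqrt 3 ltac:(lra)). pose proof (sqrt_lt_R0 3 ltac:(lra)).
  assert (hs : sqrt (k ^ 2 + 12 * INR n) <= Rabs k + 2 * sqrt 3 * sqrt (INR n)).
  { apply sqrt_le_of_sq; [nra|].
    assert (0 <= Rabs k * sqrt 3 * sqrt (INR n)) by (apply Rmult_le_pos; nra).
    nra. }
  replace (sqrt (INR n) / sqrt 3) with (sqrt 3 * sqrt (INR n) / 3)
    by (field_simplify_eq; nra).
  unfold string_equilibrium. lra.
Qed.

Lemma string_equilibrium_ge_abs k n : 52 * k ^ 2 <= INR n ->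
  4 * Rabs k <= string_equilibrium k n.
Proof.
  intros hn. unfold string_equilibrium.
  pose proof (Rabs_pos k). pose proof (pow2_abs k).
  assert (- k <= Rabs k) by (rewrite <- Rabs_Ropp; apply Rle_abs).
  pose proof (le_sqrt_of_sq (k ^ 2 + 12 * INR n) (25 * Rabs k) ltac:(lra) ltac:(nra)).
  lra.
Qed.

Lemma shifted_sqrt_concave s sm sp : 0 < s -> 0 <= sm -> 0 <= sp ->
  sm ^ 2 = s ^ 2 - 12 -> sp ^ 2 = s ^ 2 + 12 ->
  0 <= 2 * s - sm - sp /\ (2 * s - sm - sp) * s ^ 3 <= 144.
Proof.
  intros hs hm hp em ep.
  assert (hprod : (sm * sp) ^ 2 = (s ^ 2) ^ 2 - 144)
    by (replace ((sm * sp) ^ 2) with (sm ^ 2 * sp ^ 2) by ring; rewrite em, ep; ring).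
  assert (hmp : sm * sp <= s ^ 2) by nra.
  assert (hsum : sm + sp <= 2 * s) by nra.
  (* [(2s - sm - sp)(2s + sm + sp) = 2 (s^2 - sm sp)] and
     [(s^2 - sm sp)(s^2 + sm sp) = 144]. *)
  assert (hgap : (s ^ 2 - sm * sp) * s ^ 2 <= 144).
  { assert (0 <= (s ^ 2 - sm * sp) * (sm * sp)) by (apply Rmult_le_pos; nra).
    nra. }
  assert (hsig : (2 * s - sm - sp) * s <= s ^ 2 - sm * sp) by nra.
  split; [lra|].
  assert ((2 * s - sm - sp) * s * s ^ 2 <= (s ^ 2 - sm * sp) * s ^ 2)
    by (apply Rmult_le_compat_r; nra).
  nra.
Qed.

Lemma string_equilibrium_concave k m :
  0 <= 2 * string_equilibrium k (S m) - string_equilibrium k m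
         - string_equilibrium k (S (S m)) /\
  (2 * string_equilibrium k (S m) - string_equilibrium k m
     - string_equilibrium k (S (S m))) * sqrt (k ^ 2 + 12 * INR (S m)) ^ 3 <= 24.
Proof.
  unfold string_equilibrium.
  pose proof (pow2_sqrt _ (string_discriminant_nonneg k m)).
  pose proof (pow2_sqrt _ (string_discriminant_nonneg k (S m))).
  pose proof (pow2_sqrt _ (string_discriminant_nonneg k (S (S m)))).
  pose proof (sqrt_pos (k ^ 2 + 12 * INR m)).
  pose proof (sqrt_pos (k ^ 2 + 12 * INR (S (S m)))).
  assert (0 < sqrt (k ^ 2 + 12 * INR (S m))).
  { apply sqrt_lt_R0. rewrite S_INR. pose proof (pos_INR m). nra. }
  rewrite !S_INR in *.
  destruct (shifted_sqrt_concave (sqrt (k ^ 2 + 12 * (INR m + 1)))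
    (sqrt (k ^ 2 + 12 * INR m)) (sqrt (k ^ 2 + 12 * (INR m + 1 + 1)))); lra.
Qed.

Lemma string_cross_bound n b B k : 0 < b -> 0 < B ->
  b ^ 2 - k * b <= n -> n = 3 * B ^ 2 - k * B -> 4 * Rabs k <= B ->
  3 * B * b <= 2 * n.
Proof.
  intros hb hB hbn hBn hk.
  pose proof (Rle_abs k).
  assert (- k <= Rabs k) by (rewrite <- Rabs_Ropp; apply Rle_abs).
  (* [b] cannot exceed [2 B - 2 k / 3], at which [b^2 - k b] already exceeds [n]. *)
  destruct (Rle_or_lt b (2 * B - 2 * k / 3)) as [hy|hy]; [nra|].
  exfalso.
  assert (0 < (b - (2 * B - 2 * k / 3)) * (b + (2 * B - 2 * k / 3) - k))
    by (apply Rmult_lt_0_compat; lra).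
  assert (0 <= B * (B - 11/3 * Rabs k)) by (apply Rmult_le_pos; lra).
  nra.
Qed.

Lemma string_error_step n b bm bp B Bm Bp k t : 0 < b -> 0 < B ->
  n = b * (bm + b + bp - k) -> n = 3 * B ^ 2 - k * B -> 3 * B * b <= 2 * n ->
  0 <= 2 * B - Bm - Bp <= t ->
  Rabs (b - B) <= 2/5 * (Rabs (bm - Bm) + Rabs (bp - Bp)) + t.
Proof.
  intros hb hB hbn hBn hcross [hs0 hst].
  set (sigma := 2 * B - Bm - Bp) in *.
  assert (hid : (b - B) * (n + B * b) = b * B * (sigma - (bm - Bm) - (bp - Bp))).
  { apply Rminus_diag_uniq.
    replace ((b - B) * (n + B * b) - b * B * (sigma - (bm - Bm) - (bp - Bp)))
      with (b * (n - (3 * B ^ 2 - k * B)) - B * (n - b * (bm + b + bp - k)))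
      by (unfold sigma; ring).
    rewrite <- hbn, <- hBn. ring. }
  assert (htri : Rabs (sigma - (bm - Bm) - (bp - Bp))
                 <= t + (Rabs (bm - Bm) + Rabs (bp - Bp))).
  { unfold Rminus at 1 2. eapply Rle_trans; [apply Rabs_triang|].
    eapply Rle_trans; [apply Rplus_le_compat_r, Rabs_triang|].
    rewrite !Rabs_Ropp, (Rabs_pos_eq sigma) by lra. lra. }
  assert (hbB : 0 < b * B) by nra.
  (* [n + B b >= 5/2 b B] is what produces the contraction factor 2/5. *)
  assert (hmain : Rabs (b - B) * (5/2 * (b * B))
                  <= b * B * (t + (Rabs (bm - Bm) + Rabs (bp - Bp)))).
  { apply Rle_trans with (Rabs ((b - B) * (n + B * b))).
    - rewrite Rabs_mult, (Rabs_pos_eq (n + B * b)) by nra.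
      apply Rmult_le_compat_l; [apply Rabs_pos | nra].
    - rewrite hid, Rabs_mult, (Rabs_pos_eq (b * B)) by lra.
      apply Rmult_le_compat_l; lra. }
  assert (Rabs (b - B) * (5/2) <= t + (Rabs (bm - Bm) + Rabs (bp - Bp)))
    by (apply Rmult_le_reg_l with (b * B); nra).
  lra.
Qed.

Section FreudSolution.

Variables (k : R) (b : nat -> R).
Hypothesis hb : freud_solution k b.

Lemma freud_pos n : (1 <= n)%nat -> 0 < b n.
Proof. destruct hb as [_ [hpos _]]. apply hpos. Qed.

Lemma freud_nonneg n : 0 <= b n.
Proof.
  destruct n as [|n]; [destruct hb as [-> _]; lra|].
  apply Rlt_le, freud_pos. lia.
Qed.

Lemma freud_string_eq m :
  INR (S m) = b (S m) * (b m + b (S m) + b (S (S m)) - k).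
Proof.
  destruct hb as [_ [_ hrec]].
  specialize (hrec (S m) ltac:(lia)). replace (S m - 1)%nat with m in hrec by lia.
  pose proof (freud_pos (S m) ltac:(lia)).
  rewrite <- hrec. field. lra.
Qed.

Lemma freud_quadratic_bound m : b (S m) ^ 2 - k * b (S m) <= INR (S m).
Proof.
  rewrite freud_string_eq.
  pose proof (freud_nonneg m). pose proof (freud_nonneg (S m)).
  pose proof (freud_nonneg (S (S m))). nra.
Qed.

Lemma freud_linear_bound m : b (S m) <= INR (S m) + Rabs k + 1.
Proof.
  pose proof (freud_quadratic_bound m). pose proof (freud_nonneg (S m)).
  pose proof (pos_INR (S m)). pose proof (Rle_abs k).
  destruct (Rle_or_lt (b (S m)) 1); [pose proof (Rabs_pos k); lra|].
  destruct (Rle_or_lt (b (S m) - k) 0); [lra|].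
  assert (0 <= (b (S m) - 1) * (b (S m) - k)) by (apply Rmult_le_pos; lra).
  nra.
Qed.

Lemma freud_error_le_linear n : (1 <= n)%nat ->
  Rabs (b n - string_equilibrium k n) <= 3 * INR n + 2 * Rabs k + k ^ 2 + 2.
Proof.
  intros hn. destruct n as [|m]; [lia|].
  pose proof (freud_linear_bound m). pose proof (freud_nonneg (S m)).
  pose proof (string_equilibrium_le_linear k (S m)).
  pose proof (string_equilibrium_pos k (S m) hn).
  apply Rabs_le. lra.
Qed.

(* By [string_equilibrium_concave], the hypothesis [24 <= t s^3] bounds the
   concavity defect of the equilibrium by [t]. *)
Lemma freud_error_step m t :
  4 * Rabs k <= string_equilibrium k (S m) ->
  24 <= t * sqrt (k ^ 2 + 12 * INR (S m)) ^ 3 ->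
  Rabs (b (S m) - string_equilibrium k (S m)) <=
    2/5 * (Rabs (b m - string_equilibrium k m)
           + Rabs (b (S (S m)) - string_equilibrium k (S (S m)))) + t.
Proof.
  intros hk ht.
  destruct (string_equilibrium_concave k m) as [hs0 hs24].
  assert (0 < sqrt (k ^ 2 + 12 * INR (S m)) ^ 3).
  { apply pow_lt, sqrt_lt_R0. rewrite S_INR. pose proof (pos_INR m). nra. }
  pose proof (string_equilibrium_pos k (S m) ltac:(lia)).
  apply string_error_step with (n := INR (S m)) (k := k).
  - apply freud_pos. lia.
  - assumption.
  - apply freud_string_eq.
  - apply string_equilibrium_eq.
  - apply string_cross_bound with k; try assumption.
    + apply freud_pos. lia.
    + apply freud_quadratic_bound.
    + apply string_equilibrium_eq.
  - split; [lra | nra].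
Qed.

Lemma freud_error_decay M0 t : (1 <= M0)%nat -> 0 <= t ->
  (forall n, (M0 < n)%nat -> 4 * Rabs k <= string_equilibrium k n) ->
  (forall n, (M0 < n)%nat -> 24 <= t * sqrt (k ^ 2 + 12 * INR n) ^ 3) ->
  forall n, (M0 <= n)%nat ->
    Rabs (b n - string_equilibrium k n)
      <= Rabs (b M0 - string_equilibrium k M0) * (/2) ^ (n - M0) + 5 * t.
Proof.
  intros hM0 ht hk h24 n hn.
  set (E := fun j => Rabs (b (M0 + j)%nat - string_equilibrium k (M0 + j))).
  enough (h : E (n - M0)%nat <= E 0%nat * (/2) ^ (n - M0) + 5 * t).
  { unfold E in h. rewrite Nat.add_0_r in h.
    replace (M0 + (n - M0))%nat with n in h by lia. exact h. }
  apply (two_sided_recursion_decay E (3 * INR M0 + 2 * Rabs k + k ^ 2 + 5)).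
  - pose proof (pos_INR M0). pose proof (Rabs_pos k). nra.
  - exact ht.
  - intros i. split; [apply Rabs_pos|].
    pose proof (freud_error_le_linear (M0 + i) ltac:(lia)).
    rewrite plus_INR in *. pose proof (pos_INR M0). pose proof (pos_INR i).
    pose proof (Rabs_pos k). unfold E. nra.
  - intros i. unfold E.
    replace (M0 + S i)%nat with (S (M0 + i)) by lia.
    replace (M0 + S (S i))%nat with (S (S (M0 + i))) by lia.
    apply freud_error_step; [apply hk | apply h24]; lia.
Qed.

End FreudSolution.

Lemma C_alpha_pos cp : 0 < cp -> 0 < C_alpha cp.
Proof.
  intros hcp. unfold C_alpha, Rpower.
  apply Rdiv_lt_0_compat; [apply exp_pos | apply sqrt_lt_R0, hcp].
Qed.

Lemma C_alpha_pow4 cp : 0 < cp -> C_alpha cp ^ 4 = 3 / cp ^ 2.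
Proof.
  intros hcp. unfold C_alpha.
  pose proof (sqrt_lt_R0 cp hcp). pose proof (pow2_sqrt cp ltac:(lra)).
  replace ((Rpower 3 (1/4) / sqrt cp) ^ 4) with (Rpower 3 (1/4) ^ 4 / (sqrt cp ^ 2) ^ 2)
    by (field; lra).
  rewrite Rpower_pow4 by lra. replace (4 * (1/4)) with 1 by field.
  rewrite Rpower_1 by lra. congruence.
Qed.

Lemma theta_factor_pos N : (1 <= N)%nat -> 0 < (1 + 1 / INR N) * (1 + 2 / INR N).
Proof.
  intros hN. pose proof (lt_0_INR N ltac:(lia)).
  assert (0 < 1 / INR N) by (apply Rdiv_lt_0_compat; lra).
  assert (0 < 2 / INR N) by (apply Rdiv_lt_0_compat; lra). nra.
Qed.

Lemma theta_pos cp N : 0 < cp -> 0 < theta cp N.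
Proof.
  intros hcp. unfold theta, Rpower.
  pose proof (pow_lt _ 2 hcp).
  apply Rmult_lt_0_compat; [lra | apply exp_pos].
Qed.

Lemma shift_factor_antitone N n : (1 <= N)%nat -> (N <= n)%nat ->
  (1 + 1 / INR n) * (1 + 2 / INR n) <= (1 + 1 / INR N) * (1 + 2 / INR N).
Proof.
  intros hN hn. pose proof (lt_0_INR N ltac:(lia)). pose proof (le_INR N n hn).
  assert (1 / INR n <= 1 / INR N)
    by (apply Rmult_le_compat_l; [lra | apply Rinv_le_contravar; lra]).
  assert (2 / INR n <= 2 / INR N)
    by (apply Rmult_le_compat_l; [lra | apply Rinv_le_contravar; lra]).
  assert (0 < 1 / INR n) by (apply Rdiv_lt_0_compat; lra).
  assert (0 < 2 / INR n) by (apply Rdiv_lt_0_compat; lra). nra.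
Qed.

Lemma theta_pow4 cp N : (1 <= N)%nat ->
  theta cp N ^ 4 = (cp ^ 2 / 3) ^ 4 * ((1 + 1 / INR N) * (1 + 2 / INR N)).
Proof.
  intros hN. pose proof (theta_factor_pos N hN).
  unfold theta. rewrite Rpow_mult_distr, Rpower_pow4 by lra.
  replace (4 * (1/4)) with 1 by field. rewrite Rpower_1 by lra. reflexivity.
Qed.

Lemma Rpower_three_quarters_pow4 x : 0 < x -> Rpower x (3/4) ^ 4 = x ^ 3.
Proof.
  intros hx. rewrite Rpower_pow4 by exact hx.
  replace (4 * (3/4)) with (INR 3) by (simpl; field). apply Rpower_pow, hx.
Qed.

Lemma a_coef_pos b m : 0 < b m -> 0 < a_coef b m.
Proof. apply sqrt_lt_R0. Qed.

Lemma a_coef_pow4 b m : 0 <= b m -> a_coef b m ^ 4 = b m ^ 2.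
Proof.
  intros hbm. unfold a_coef.
  replace (sqrt (b m) ^ 4) with ((sqrt (b m) ^ 2) ^ 2) by ring.
  rewrite pow2_sqrt by exact hbm. reflexivity.
Qed.

Lemma upper_pair_a_coef_pow4 b cp N m : upper_pair b cp N -> (N <= m)%nat ->
  0 <= b m -> a_coef b m ^ 4 <= cp ^ 2 / 3 * INR m.
Proof.
  intros hup hm hbm. rewrite a_coef_pow4 by exact hbm.
  pose proof (pow_incr _ _ 2 (conj hbm (hup m hm))).
  pose proof (pos_INR m). pose proof (sqrt_lt_R0 3 ltac:(lra)).
  replace ((cp * sqrt (INR m) / sqrt 3) ^ 2)
    with (cp ^ 2 * sqrt (INR m) ^ 2 / sqrt 3 ^ 2) in * by (field; lra).
  rewrite !pow2_sqrt in * by lra. lra.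
Qed.

Section AlphaBeta.

Variables (k : R) (b : nat -> R) (cp : R) (N : nat).
Hypotheses (hb : freud_solution k b) (hcp : 0 < cp) (hN : (1 <= N)%nat)
  (hup : upper_pair b cp N).

Lemma freud_alpha_lower_bound n : (N <= n)%nat ->
  alpha b n >= C_alpha cp * Rpower (INR n) (3/4).
Proof.
  intros hn. apply Rle_ge.
  pose proof (lt_0_INR n ltac:(lia)) as hn0.
  pose proof (freud_pos k b hb n ltac:(lia)) as hbn.
  pose proof (a_coef_pos b n hbn) as ha.
  pose proof (upper_pair_a_coef_pow4 b cp N n hup hn (Rlt_le _ _ hbn)) as ha4.
  pose proof (C_alpha_pos cp hcp). pose proof (pow_lt _ 4 ha).
  unfold alpha. apply (pow_le_reg 4); [lia | | |].
  - apply Rmult_le_pos; [lra | unfold Rpower; left; apply exp_pos].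
  - left. apply Rdiv_lt_0_compat; lra.
  - rewrite Rpow_mult_distr, C_alpha_pow4, Rpower_three_quarters_pow4 by lra.
    replace ((INR n / a_coef b n) ^ 4) with (INR n ^ 4 / a_coef b n ^ 4) by (field; lra).
    apply Rmult_le_reg_r with (cp ^ 2 * a_coef b n ^ 4); [nra|].
    replace (INR n ^ 4 / a_coef b n ^ 4 * (cp ^ 2 * a_coef b n ^ 4))
      with (cp ^ 2 * INR n ^ 4) by (field; lra).
    replace (3 / cp ^ 2 * INR n ^ 3 * (cp ^ 2 * a_coef b n ^ 4))
      with (3 * INR n ^ 3 * a_coef b n ^ 4) by (field; lra).
    assert (0 <= 3 * INR n ^ 3) by (pose proof (pow_lt _ 3 hn0); lra). nra.
Qed.

Lemma freud_beta_alpha_upper_bound n : (N <= n)%nat ->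
  beta b n / alpha b n <= theta cp N.
Proof.
  intros hn.
  pose proof (lt_0_INR n ltac:(lia)) as hn0.
  set (c := cp ^ 2 / 3).
  assert (hc : 0 < c) by (unfold c; nra).
  assert (ha : forall m, (n <= m)%nat -> 0 < a_coef b m /\ a_coef b m ^ 4 <= c * INR m).
  { intros m hm. pose proof (freud_pos k b hb m ltac:(lia)).
    split; [apply a_coef_pos; lra|].
    apply (upper_pair_a_coef_pow4 b cp N m hup); [lia | lra]. }
  destruct (ha n (le_n n)) as [ha0 hb0].
  destruct (ha (S n) ltac:(lia)) as [ha1 hb1].
  destruct (ha (S (S n)) ltac:(lia)) as [ha2 hb2].
  rewrite S_INR in hb1. rewrite !S_INR in hb2.
  unfold beta, alpha.
  set (a0 := a_coef b n) in *. set (a1 := a_coef b (S n)) in *.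
  set (a2 := a_coef b (S (S n))) in *.
  replace (a0 * a1 * a2 / (INR n / a0)) with (a0 ^ 2 * a1 * a2 / INR n) by (field; lra).
  assert (0 < a0 ^ 2 * a1 * a2)
    by (repeat apply Rmult_lt_0_compat; try apply pow_lt; lra).
  pose proof (theta_pos cp N hcp).
  apply (pow_le_reg 4); [lia | left; apply Rdiv_lt_0_compat; lra | lra |].
  rewrite theta_pow4 by exact hN. fold c.
  apply Rle_trans with (c ^ 4 * ((1 + 1 / INR n) * (1 + 2 / INR n))).
  2: { apply Rmult_le_compat_l; [apply pow_le; lra|].
       apply shift_factor_antitone; assumption. }
  replace ((a0 ^ 2 * a1 * a2 / INR n) ^ 4)
    with ((a0 ^ 4) ^ 2 * (a1 ^ 4 * a2 ^ 4) / INR n ^ 4) by (field; lra).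
  replace (c ^ 4 * ((1 + 1 / INR n) * (1 + 2 / INR n)))
    with ((c * INR n) ^ 2 * ((c * (INR n + 1)) * (c * (INR n + 1 + 1))) / INR n ^ 4)
    by (field; lra).
  apply Rmult_le_compat_r; [left; apply Rinv_0_lt_compat, pow_lt; lra|].
  apply Rmult_le_compat.
  - apply pow_le, pow_le; lra.
  - apply Rmult_le_pos; apply pow_le; lra.
  - apply pow_incr. split; [apply pow_le; lra | exact hb0].
  - apply Rmult_le_compat; try (apply pow_le; lra); assumption.
Qed.

End AlphaBeta.

Lemma string_discriminant_cube_ge k n a : 0 <= a -> a ^ 2 <= 12 * INR n ->
  a ^ 3 <= sqrt (k ^ 2 + 12 * INR n) ^ 3.
Proof.
  intros ha han. apply pow_incr. split; [exact ha|].
  apply le_sqrt_of_sq; [exact ha|]. pose proof (pow2_ge_0 k). lra.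
Qed.

Lemma sqrt_div_sqrt3_absorbs cp A n : 1 < cp -> 0 <= A ->
  (sqrt 3 * A / (cp - 1)) ^ 2 <= INR n ->
  sqrt (INR n) / sqrt 3 + A <= cp * sqrt (INR n) / sqrt 3.
Proof.
  intros hcp hA hn. pose proof (sqrt_lt_R0 3 ltac:(lra)).
  assert (hX : sqrt 3 * A / (cp - 1) <= sqrt (INR n)).
  { apply le_sqrt_of_sq; [|exact hn]. apply Rmult_le_pos; [nra|].
    left. apply Rinv_0_lt_compat. lra. }
  apply Rmult_le_reg_r with (sqrt 3); [lra|].
  replace ((sqrt (INR n) / sqrt 3 + A) * sqrt 3) with (sqrt (INR n) + sqrt 3 * A)
    by (field; lra).
  replace (cp * sqrt (INR n) / sqrt 3 * sqrt 3)
    with (sqrt (INR n) + (cp - 1) * sqrt (INR n)) by (field; lra).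
  apply Rmult_le_compat_l with (r := cp - 1) in hX; [|lra].
  replace ((cp - 1) * (sqrt 3 * A / (cp - 1))) with (sqrt 3 * A) in hX by (field; lra).
  lra.
Qed.

Lemma freud_upper_pair_exists k b cp : freud_solution k b -> 1 < cp ->
  exists N : nat, (1 <= N)%nat /\ upper_pair b cp N.
Proof.
  intros hb hcp.
  destruct (INR_unbounded (52 * k ^ 2)) as [N0 hN0].
  set (M0 := S N0).
  assert (hlarge : forall n, (M0 < n)%nat -> 52 * k ^ 2 <= INR n /\ 1 <= INR n).
  { intros n hn. pose proof (le_INR (S N0) n ltac:(lia)). rewrite S_INR in *.
    pose proof (pos_INR N0). lra. }
  assert (hk : forall m, (M0 < m)%nat -> 4 * Rabs k <= string_equilibrium k m)
    by (intros m hm; apply string_equilibrium_ge_abs, hlarge, hm).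
  assert (h24 : forall m, (M0 < m)%nat -> 24 <= 1 * sqrt (k ^ 2 + 12 * INR m) ^ 3).
  { intros m hm. destruct (hlarge m hm).
    pose proof (string_discriminant_cube_ge k m 3 ltac:(lra) ltac:(lra)). lra. }
  pose proof (freud_error_decay k b hb M0 1 ltac:(lia) ltac:(lra) hk h24) as hdecay.
  set (K := Rabs (b M0 - string_equilibrium k M0) + 5).
  assert (hK : 0 <= K)
    by (pose proof (Rabs_pos (b M0 - string_equilibrium k M0)); unfold K; lra).
  destruct (INR_unbounded ((sqrt 3 * (Rabs k / 3 + K) / (cp - 1)) ^ 2)) as [N1 hN1].
  exists (M0 + N1)%nat. split; [lia|].
  intros n hn.
  assert (hbn : b n <= string_equilibrium k n + K).
  { assert (hdn : Rabs (b n - string_equilibrium k n) <= K).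
    { destruct (half_pow_bounds (n - M0)).
      pose proof (Rabs_pos (b M0 - string_equilibrium k M0)).
      specialize (hdecay n ltac:(lia)).
      unfold K. nra. }
    pose proof (Rle_abs (b n - string_equilibrium k n)). lra. }
  pose proof (string_equilibrium_le_sqrt k n).
  pose proof (Rabs_pos k).
  pose proof (sqrt_div_sqrt3_absorbs cp (Rabs k / 3 + K) n hcp ltac:(lra)).
  enough ((sqrt 3 * (Rabs k / 3 + K) / (cp - 1)) ^ 2 <= INR n) by lra.
  pose proof (le_INR N1 n ltac:(lia)). lra.
Qed.

Lemma quartic_equilibrium_margin z : 27 <= z ->
  (4 + sqrt (4 ^ 2 + 12 * (3 * z ^ 2))) / 6 + 6 / 100000 <= 1025 / 1000 * z.
Proof.
  intros hz.
  assert (sqrt (4 ^ 2 + 12 * (3 * z ^ 2)) <= 615/100 * z - 400036/100000).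
  { apply sqrt_le_of_sq; [lra|].
    assert (0 <= (z - 27) * (18225/10000 * (z + 27) - 2 * 615/100 * 400036/100000))
      by (apply Rmult_le_pos; lra).
    nra. }
  lra.
Qed.

Lemma freud_quartic_near_equilibrium b : freud_solution 4 b ->
  forall n, (2187 <= n)%nat -> b n <= string_equilibrium 4 n + 6/100000.
Proof.
  intros hb.
  assert (hlarge : forall n, (2099 < n)%nat -> 2100 <= INR n).
  { intros n hn. replace 2100 with (INR 2100) by (rewrite INR_IZR_INZ; reflexivity).
    apply le_INR. lia. }
  assert (hk : forall m, (2099 < m)%nat -> 4 * Rabs 4 <= string_equilibrium 4 m).
  { intros m hm. apply string_equilibrium_ge_abs. pose proof (hlarge m hm). lra. }
  assert (h24 : forall m, (2099 < m)%nat ->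
                  24 <= 1/100000 * sqrt (4 ^ 2 + 12 * INR m) ^ 3).
  { intros m hm. pose proof (hlarge m hm).
    pose proof (string_discriminant_cube_ge 4 m 150 ltac:(lra) ltac:(lra)). lra. }
  pose proof (freud_error_decay 4 b hb 2099 (1/100000) ltac:(lia) ltac:(lra) hk h24)
    as hdecay.
  assert (he0 : Rabs (b 2099%nat - string_equilibrium 4 2099) <= 6323).
  { pose proof (freud_error_le_linear 4 b hb 2099 ltac:(lia)).
    replace (INR 2099) with 2099 in * by (rewrite INR_IZR_INZ; reflexivity).
    rewrite (Rabs_pos_eq 4) in * by lra. lra. }
  intros n hn.
  assert (hpow : (/2) ^ (n - 2099) <= (/2) ^ 88).
  { replace (n - 2099)%nat with (88 + (n - 2187))%nat by lia.
    rewrite pow_add. pose proof (half_pow_bounds (n - 2187)).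
    pose proof (half_pow_bounds 88). nra. }
  assert (h88 : 6323 * (/2) ^ 88 <= 1/100000).
  { rewrite pow_inv. unfold pow. lra. }
  specialize (hdecay n ltac:(lia)).
  pose proof (Rle_abs (b n - string_equilibrium 4 n)).
  pose proof (Rabs_pos (b 2099%nat - string_equilibrium 4 2099)).
  pose proof (half_pow_bounds (n - 2099)). nra.
Qed.

Lemma freud_quartic_upper_pair b : freud_solution 4 b -> upper_pair b (1025/1000) 2187.
Proof.
  intros hb n hn.
  pose proof (freud_quartic_near_equilibrium b hb n hn) as hbn.
  assert (hn3 : 2187 / 3 <= INR n / 3).
  { replace 2187 with (INR 2187) by (rewrite INR_IZR_INZ; reflexivity).
    apply Rmult_le_compat_r; [lra | apply le_INR, hn]. }
  replace (1025/1000 * sqrt (INR n) / sqrt 3) with (1025/1000 * sqrt (INR n / 3))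
    by (rewrite sqrt_div by lra; field; apply Rgt_not_eq, sqrt_lt_R0; lra).
  pose proof (pow2_sqrt (INR n / 3) ltac:(lra)) as hz.
  pose proof (le_sqrt_of_sq (INR n / 3) 27 ltac:(lra) ltac:(lra)).
  pose proof (quartic_equilibrium_margin (sqrt (INR n / 3)) ltac:(lra)).
  unfold string_equilibrium in hbn.
  replace (INR n) with (3 * sqrt (INR n / 3) ^ 2) in hbn at 1 by lra.
  lra.
Qed.

Lemma Rabs_lt_of_pow4_bracket x c e : 0 <= x -> 0 <= c + e ->
  (c - e) ^ 4 < x ^ 4 -> x ^ 4 < (c + e) ^ 4 -> Rabs (x - c) < e.
Proof.
  intros hx hce hlo hhi. apply Rabs_def1.
  - pose proof (pow_lt_reg 4 x (c + e) hce hhi). lra.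
  - pose proof (pow_lt_reg 4 (c - e) x hx hlo). lra.
Qed.

Lemma C_alpha_quartic_value :
  Rabs (C_alpha (1025/1000) - 1299925254 / 10^9) < 1 / 10^9.
Proof.
  pose proof (C_alpha_pos (1025/1000) ltac:(lra)).
  apply Rabs_lt_of_pow4_bracket; [lra | lra | |];
    rewrite C_alpha_pow4 by lra; unfold pow; lra.
Qed.

Lemma theta_quartic_value :
  Rabs (theta (1025/1000) 2187 - 350328462 / 10^9) < 1 / 10^7.
Proof.
  assert (h2187 : INR 2187 = 2187) by (rewrite INR_IZR_INZ; reflexivity).
  pose proof (theta_pos (1025/1000) 2187 ltac:(lra)).
  apply Rabs_lt_of_pow4_bracket; [lra | lra | |];
    rewrite theta_pow4, h2187 by lia; unfold pow; lra.
Qed.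

Theorem mainTheorem11 (kappa : R) (b : nat -> R) (hb : freud_solution kappa b) :
  (forall cp : R, 1 < cp -> exists N : nat, (1 <= N)%nat /\ upper_pair b cp N)
  /\
  (forall (cp : R) (N : nat), 1 < cp -> (1 <= N)%nat -> upper_pair b cp N ->
     forall n : nat, (N <= n)%nat ->
       alpha b n >= C_alpha cp * Rpower (INR n) (3/4) /\
       beta b n / alpha b n <= theta cp N)
  /\
  (kappa = 4 ->
     upper_pair b (1025/1000) 2187 /\
     Rabs (C_alpha (1025/1000) - 1299925254 / 10^9) < 1 / 10^9 /\
     Rabs (theta (1025/1000) 2187 - 350328462 / 10^9) < 1 / 10^7).
Proof.
  split; [|split].
  - intros cp hcp. exact (freud_upper_pair_exists kappa b cp hb hcp).
  - intros cp N hcp hN hup n hn. split.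
    + apply (freud_alpha_lower_bound kappa b cp N); auto; lra.
    + apply (freud_beta_alpha_upper_bound kappa b cp N); auto; lra.
  - intros ->. split; [|split].
    + exact (freud_quartic_upper_pair b hb).
    + exact C_alpha_quartic_value.
    + exact theta_quartic_value.
Qed.
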